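(* If $B^{(0)}(X,Y),\dots,B^{(\ell)}(X,Y)\in\mathbb F_q[X,Y]$ is a basis of the $\mathbb F_q[X]$-module $M_{s,\ell}$, then $B^{(0)},\dots,B^{(\ell)},\,Y^{\ell-s+1}(Y-R(X))^s$ is a basis of $M_{s,\ell+1}$.
   Context: Let $\mathbb F_q$ be a finite field and $n<q$. Let $\alpha_0,\dots,\alpha_{n-1}$ be distinct nonzero elements of $\mathbb F_q$, $w_0,\dots,w_{n-1}$ nonzero elements of $\mathbb F_q$, $r\in\mathbb F_q^n$, $r_i'=r_i/w_i$, and $R(X)$ the unique polynomial of degree less than $n$ with $R(\alpha_i)=r_i'$. For positive integers $s\le\ell$, $M_{s,\ell}$ is the $\mathbb F_q[X]$-module of all $Q\in\mathbb F_q[X,Y]$ of $Y$-degree at most $\ell$ such that for every $i$, $Q(X+\alpha_i,Y+r_i')$ has no monomials of total degree less than $s$. *)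

From HB Require Import structures.
From mathcomp Require Import all_boot all_order all_algebra all_field.
Set Implicit Arguments. Unset Strict Implicit. Unset Printing Implicit Defensive.
Import GRing.Theory.
Local Open Scope ring_scope.

(* Bivariate polynomials F[X,Y] are represented as {poly {poly F}}:
   the outer variable is Y, the coefficients are polynomials in X.
   So for Q : {poly {poly F}}, (Q`_j)`_i is the coefficient of X^i Y^j. *)

Definition shiftXY (F : fieldType) (a b : F) (Q : {poly {poly F}}) : {poly {poly F}} :=
  (map_poly (fun c : {poly F} => c \Po ('X + a%:P)) Q) \Po ('X + (b%:P)%:P).

Definition vanishes_to (F : fieldType) (s : nat) (a b : F) (Q : {poly {poly F}}) : Prop :=
  forall i j : nat, (i + j < s)%N -> ((shiftXY a b Q)`_j)`_i = 0.

Definition inM (F : fieldType) (n s l : nat) (alpha r' : 'I_n -> F)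
    (Q : {poly {poly F}}) : Prop :=
  (size Q <= l.+1)%N /\ forall i : 'I_n, vanishes_to s (alpha i) (r' i) Q.

Definition lincomb (F : fieldType) (c bs : seq {poly {poly F}}) : {poly {poly F}} :=
  \sum_(k < size bs) c`_k * bs`_k.

Definition is_Fx_basis (F : fieldType) (M : {poly {poly F}} -> Prop)
    (bs : seq {poly {poly F}}) : Prop :=
  [/\ (forall k, (k < size bs)%N -> M bs`_k),
      (forall c : seq {poly F}, size c = size bs ->
          lincomb (map polyC c) bs = 0 -> forall k, c`_k = 0) &
      (forall Q, M Q -> exists c : seq {poly F},
          size c = size bs /\ Q = lincomb (map polyC c) bs)].

(* The order of vanishing at a point is additive under products, so the
   generator G = Y^(l-s+1) (Y - R(X))^s lies in M_{s,l+1}: its second factor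
   vanishes to order s at every (alpha_i, r'_i) because R interpolates these
   points.  G is monic in Y of degree l+1, hence Q - Q_{l+1}(X) G lowers the
   Y-degree of any Q in M_{s,l+1} while staying in the module, which gives
   spanning; comparing coefficients of Y^(l+1) gives independence. *)

From HB Require Import structures.
From mathcomp Require Import all_boot all_order all_algebra all_field.
From mathcomp Require Import zify.
Import GRing.Theory.
Local Open Scope ring_scope.

Section Vanishing.
Context {F : fieldType}.
Implicit Types P Q : {poly {poly F}}.

Definition vanishes_at0 s P := forall i j : nat, (i + j < s)%N -> (P`_j)`_i = 0.

Lemma vanishes_at0B s P Q :
  vanishes_at0 s P -> vanishes_at0 s Q -> vanishes_at0 s (P - Q).
Proof. by move=> hP hQ i j hij; rewrite !coefB hP ?hQ ?subrr. Qed.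

Lemma vanishes_at0M s t P Q :
  vanishes_at0 s P -> vanishes_at0 t Q -> vanishes_at0 (s + t) (P * Q).
Proof.
move=> hP hQ i j hij; rewrite coefM coef_sum big1 // => k _.
rewrite coefM big1 // => m _.
have := ltn_ord k; have := ltn_ord m => hm hk.
have [hs|hs] := ltnP (m + k) s; first by rewrite hP ?mul0r.
by rewrite hQ ?mulr0 //; lia.
Qed.

Lemma vanishes_at0X s P : vanishes_at0 1 P -> vanishes_at0 s (P ^+ s).
Proof.
move=> hP; elim: s => [|s IHs]; first by [].
by rewrite exprS -add1n; apply: vanishes_at0M.
Qed.

HB.instance Definition _ (a b : F) := GRing.RMorphism.copy (shiftXY a b)
  (comp_poly ('X + (b%:P)%:P) \o map_poly (comp_poly ('X + a%:P))).

Lemma shiftXY_X (a b : F) : shiftXY a b 'X = 'X + (b%:P)%:P.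
Proof. by rewrite /shiftXY map_polyX comp_polyX. Qed.

Lemma shiftXY_C (a b : F) (p : {poly F}) : shiftXY a b p%:P = (p \Po ('X + a%:P))%:P.
Proof. by rewrite /shiftXY map_polyC comp_polyC. Qed.

Lemma vanishes_toB s a b P Q :
  vanishes_to s a b P -> vanishes_to s a b Q -> vanishes_to s a b (P - Q).
Proof. by rewrite /vanishes_to rmorphB; apply: vanishes_at0B. Qed.

Lemma vanishes_toMl s a b P Q : vanishes_to s a b Q -> vanishes_to s a b (P * Q).
Proof. by rewrite /vanishes_to rmorphM -[s]add0n; apply: vanishes_at0M. Qed.

Lemma vanishes_to_XsubC_exp s a (R : {poly F}) :
  vanishes_to s a R.[a] (('X - R%:P) ^+ s).
Proof.
rewrite /vanishes_to rmorphXn; apply: vanishes_at0X => i j hij.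
have [-> ->] : i = 0%N /\ j = 0%N by lia.
rewrite rmorphB /= shiftXY_X shiftXY_C !(coefB, coefD, coefC, coefX) /=.
by rewrite add0r -horner_coef0 horner_comp !hornerE subrr.
Qed.

End Vanishing.

Section Lincomb.
Context {F : fieldType}.

Lemma lincomb_rcons (cs bs : seq {poly {poly F}}) c b :
  size cs = size bs -> lincomb (rcons cs c) (rcons bs b) = lincomb cs bs + c * b.
Proof.
move=> size_cs; rewrite /lincomb size_rcons big_ord_recr /= !nth_rcons size_cs.
rewrite ltnn eqxx; congr (_ + _).
by apply: eq_bigr => k _; rewrite !nth_rcons size_cs ltn_ord.
Qed.

Lemma coef_lincomb_eq0 (c : seq {poly F}) (bs : seq {poly {poly F}}) (m : nat) :
  {in bs, forall b : {poly {poly F}}, (size b <= m)%N} ->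
  (lincomb (map polyC c) bs)`_m = 0.
Proof.
move=> size_bs; rewrite /lincomb coef_sum big1 // => k _.
have [kc|kc] := ltnP k (size c).
  have size_bsk := size_bs _ (mem_nth 0 (ltn_ord k)).
  by rewrite (nth_map 0) // coefCM (nth_default _ size_bsk) mulr0.
by rewrite (nth_default 0 (_ : size (map polyC c) <= k)%N) ?size_map // mul0r coef0.
Qed.

End Lincomb.

Section BasisExtension.
Context {F : fieldType}.
Variable V : {poly {poly F}} -> Prop.
Hypothesis VB : forall P Q, V P -> V Q -> V (P - Q).
Hypothesis VMl : forall P Q, V Q -> V (P * Q).

Definition bounded_in (l : nat) (Q : {poly {poly F}}) := (size Q <= l.+1)%N /\ V Q.

Variables (l : nat) (B : seq {poly {poly F}}) (G : {poly {poly F}}).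
Hypotheses (basisB : is_Fx_basis (bounded_in l) B)
  (sizeG : size G = l.+2) (monicG : G \is monic) (VG : V G).

Let coefG_top : G`_l.+1 = 1.
Proof. by move/monicP: monicG; rewrite lead_coefE sizeG. Qed.

Lemma bounded_in_reduce Q :
  bounded_in l.+1 Q -> bounded_in l (Q - (Q`_l.+1)%:P * G).
Proof.
move=> [sizeQ VQ]; split; last exact/VB/VMl.
apply/leq_sizeP => j; rewrite leq_eqVlt => /orP[/eqP <-|ltj].
  by rewrite coefB coefCM coefG_top mulr1 subrr.
have [sizeQj sizeGj] : (size Q <= j)%N /\ (size G <= j)%N.
  by rewrite sizeG; split=> //; apply: leq_trans ltj.
by rewrite coefB coefCM !(nth_default 0 sizeQj, nth_default 0 sizeGj) mulr0 subrr.
Qed.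

Lemma is_Fx_basis_rcons : is_Fx_basis (bounded_in l.+1) (rcons B G).
Proof.
have [memB freeB spanB] := basisB.
split.
- move=> k; rewrite size_rcons ltnS nth_rcons leq_eqVlt.
  case: ltnP => [/memB [sizeBk VBk] _|_]; first by split=> //; apply: ltnW.
  by rewrite orbF => /eqP ->; rewrite eqxx; split; rewrite ?sizeG.
- case/lastP=> [|c q]; rewrite !size_rcons // => /eqP; rewrite eqSS => /eqP size_c.
  rewrite map_rcons lincomb_rcons ?size_map // => comb0.
  have q0 : q = 0.
    have := congr1 (fun P : {poly {poly F}} => P`_l.+1) comb0.
    rewrite coef0 coefD coefCM coefG_top mulr1 coef_lincomb_eq0 ?add0r //.
    by move=> _ /(nthP 0) [k /memB [] ? _ <-].
  move: comb0; rewrite q0 mul0r addr0 => /(freeB _ size_c) c0 k.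
  by rewrite nth_rcons; case: ltnP; rewrite // -fun_if if_same.
- move=> Q /bounded_in_reduce/spanB [c [size_c combQ]].
  exists (rcons c Q`_l.+1); rewrite !size_rcons size_c; split=> //.
  by rewrite map_rcons lincomb_rcons ?size_map // -combQ subrK.
Qed.

End BasisExtension.

Theorem lemma7 (F : finFieldType) (n : nat) (hn : (n < #|F|)%N)
  (alpha : 'I_n -> F) (halpha_inj : injective alpha)
  (halpha_nz : forall i, alpha i != 0)
  (w : 'I_n -> F) (hw : forall i, w i != 0)
  (r : 'I_n -> F) (R : {poly F})
  (hR_size : (size R <= n)%N)
  (hR_interp : forall i, R.[alpha i] = r i / w i)
  (s l : nat) (hs : (0 < s)%N) (hsl : (s <= l)%N)
  (B : seq {poly {poly F}}) (hB_size : size B = l.+1) :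
  is_Fx_basis (inM s l alpha (fun i => r i / w i)) B ->
  is_Fx_basis (inM s l.+1 alpha (fun i => r i / w i))
    (rcons B ('X ^+ (l - s + 1) * ('X - R%:P) ^+ s)).
Proof.
move=> basisB.
apply: (@is_Fx_basis_rcons _ (fun Q => forall i, vanishes_to s (alpha i) (r i / w i) Q)).
- by move=> P Q VP VQ i; apply: vanishes_toB.
- by move=> P Q VQ i; apply: vanishes_toMl.
- exact: basisB.
- rewrite size_Mmonic ?monic_neq0 ?monicXn ?monic_exp ?monicXsubC //.
  by rewrite size_polyXn size_exp_XsubC; lia.
- by rewrite monicMl ?monicXn // monic_exp // monicXsubC.
- by move=> i; rewrite -hR_interp; apply/vanishes_toMl/vanishes_to_XsubC_exp.
Qed.
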